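(* If $n>0$ then $v_1=v_2=1$.
   Context: $k$ is a field of characteristic zero, $\mathcal O_n=k[x]/(x^{n+1})$, elements of $\mathcal O_n$ identified with multiplication operators, $\operatorname{ad}_x(\delta)=x\delta-\delta x$. The order filtration is $\mathcal D^p(\mathcal O_n)=\{\delta\in\operatorname{End}_k(\mathcal O_n):[f_0,[f_1,\dots,[f_p,\delta]\dots]]=0\ \forall f_i\in\mathcal O_n\}$. For $\delta\in\mathcal D^p(\mathcal O_n)$, $\operatorname{ad}_x^p(\delta)$ is multiplication by an element of $\mathcal O_n$ and $\operatorname{ad}_x^p:\mathcal D^p(\mathcal O_n)\to\mathcal O_n$ is $\mathcal O_n$-linear, so its image is an ideal $(x^{v_p})$ of $\mathcal O_n$; $v_p\in\{0,\dots,n\}$ denotes the corresponding exponent. *)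

From HB Require Import structures.
From mathcomp Require Import all_boot all_order all_algebra.
Set Implicit Arguments. Unset Strict Implicit. Unset Printing Implicit Defensive.
Import GRing.Theory.
Local Open Scope ring_scope.

(* O_n = k[x]/(x^(n+1)) is identified with column vectors 'cV[k]_(n.+1) of
   coefficients in the basis 1, x, ..., x^n.  End_k(O_n) is identified with
   'M[k]_(n.+1), acting by  u |-> A *m u, so that composition of operators is
   the matrix product (ring multiplication in 'M[k]_(n.+1)). *)

Definition mulx (k : fieldType) (n : nat) : 'M[k]_n.+1 :=
  \matrix_(i, j) ((i == j.+1 :> nat)%:R).

Definition mulop (k : fieldType) (n : nat) (f : 'cV[k]_n.+1) : 'M[k]_n.+1 :=
  \sum_(i < n.+1) f i 0 *: (mulx k n) ^+ i.

Definition comm (k : fieldType) (n : nat) (a b : 'M[k]_n.+1) : 'M[k]_n.+1 :=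
  a * b - b * a.

Definition iter_comm (k : fieldType) (n : nat) (fs : seq 'cV[k]_n.+1)
  (d : 'M[k]_n.+1) : 'M[k]_n.+1 :=
  foldr (fun f e => comm (mulop f) e) d fs.

Definition in_Dp (k : fieldType) (n p : nat) (d : 'M[k]_n.+1) : Prop :=
  forall fs : seq 'cV[k]_n.+1, size fs = p.+1 -> iter_comm fs d = 0.

Definition adx (k : fieldType) (n : nat) (d : 'M[k]_n.+1) : 'M[k]_n.+1 :=
  comm (mulx k n) d.
Definition adx_pow (k : fieldType) (n p : nat) (d : 'M[k]_n.+1) : 'M[k]_n.+1 :=
  iter p (@adx k n) d.

(* "v_p = m": m in {0..n} and the image ad_x^p(D^p(O_n)) (a set of
   multiplication operators) is exactly the ideal (x^m) of O_n *)
Definition is_v (k : fieldType) (n p m : nat) : Prop :=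
  (m <= n)%N /\
  forall g : 'M[k]_n.+1,
    (exists d, in_Dp p d /\ adx_pow p d = g) <->
    (exists h : 'cV[k]_n.+1, g = mulop h * (mulx k n) ^+ m).

From HB Require Import structures.
From mathcomp Require Import all_boot all_order all_algebra ring.
Set Implicit Arguments. Unset Strict Implicit. Unset Printing Implicit Defensive.
Import GRing.Theory.
Local Open Scope ring_scope.

(* Since O_n is generated by x, D^p(O_n) is the kernel of ad_x^(p+1); hence
   ad_x^p(d) commutes with x and is a multiplication operator.  For p > 0 it
   is a commutator, so traceless, and in characteristic zero a traceless
   multiplication operator lies in the ideal (x).  Conversely, if
   ad_x^p(L) = x then h L lies in D^p and ad_x^p(h L) = h x; such an L is
   n/2 - x d/dx for p = 1 and (x d/dx - n) d/dx / 2 for p = 2. *)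

Lemma sum_nat_delta (R : pzSemiRingType) (N : nat) (F : 'I_N.+1 -> R) (a : nat) :
  \sum_(l < N.+1) (a == l :> nat)%:R * F l = if (a < N.+1)%N then F (inord a) else 0.
Proof.
case: ifP => a_lt.
  rewrite (bigD1 (inord a)) //= inordK // eqxx mul1r big1 ?addr0 // => l.
  by rewrite -val_eqE /= inordK // eq_sym => /negPf ->; rewrite mul0r.
rewrite big1 // => l _; case: eqP => [a_l|]; last by rewrite mul0r.
by move: (ltn_ord l); rewrite -a_l a_lt.
Qed.

Section MultiplicationByX.
Variables (k : fieldType) (n : nat).
Local Notation X := (mulx k n).
Implicit Types (M : 'M[k]_n.+1) (c : 'cV[k]_n.+1).

Lemma mulx_mul_entry m (M : 'M[k]_(n.+1, m)) i j :
  (X *m M) i j = if (0 < i)%N then M (inord i.-1) j else 0.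
Proof.
rewrite mxE; case: i => [[|i] /= i_lt].
  by rewrite big1 // => l _; rewrite mxE mul0r.
under eq_bigr do rewrite mxE eqSS.
by rewrite sum_nat_delta ltnW.
Qed.

Lemma mul_mulx_entry m (M : 'M[k]_(m, n.+1)) i j :
  (M *m X) i j = if (j < n)%N then M i (inord j.+1) else 0.
Proof.
rewrite mxE; under eq_bigr do rewrite mxE mulrC eq_sym.
by rewrite sum_nat_delta ltnS.
Qed.

Lemma mulx_pow_entry m i j : (X ^+ m) i j = (i == (j + m)%N :> nat)%:R.
Proof.
elim: m i => [|m IH] i; first by rewrite expr0 mxE addn0.
rewrite exprS -mulmxE mulx_mul_entry addnS.
case: ifP => [i_gt0|]; last by case: (nat_of_ord i).
rewrite IH inordK; last by rewrite (leq_ltn_trans (leq_pred _)).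
by rewrite -eqSS prednK.
Qed.

Lemma mulop_entry c i j : mulop c i j = \sum_(l < n.+1) (i == (j + l)%N :> nat)%:R * c l 0.
Proof.
by rewrite summxE; apply: eq_bigr => l _; rewrite mxE mulx_pow_entry mulrC.
Qed.

Lemma col0_mulop c : col 0 (mulop c) = c.
Proof.
apply/matrixP => i j; rewrite ord1 !mxE mulop_entry sum_nat_delta /=.
by rewrite ltn_ord inord_val.
Qed.

Lemma mxtrace_mulop c : \tr (mulop c) = c 0 0 *+ n.+1.
Proof.
rewrite /mxtrace (eq_bigr (fun=> c 0 0)) ?sumr_const ?card_ord // => i _.
rewrite mulop_entry (eq_bigr (fun l : 'I_n.+1 => (0 == l :> nat)%:R * c l 0)).
  by rewrite sum_nat_delta /=; congr (c _ _); apply: val_inj; rewrite /= inordK.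
by move=> l _; rewrite -{1}[nat_of_ord i]addn0 eqn_add2l.
Qed.

Lemma col0_mulx_pow (j : 'I_n.+1) : col 0 (X ^+ j) = delta_mx j 0.
Proof. by apply/matrixP => i l; rewrite ord1 !mxE mulx_pow_entry andbT. Qed.

Lemma commr_mulop M c : GRing.comm M X -> GRing.comm M (mulop c).
Proof.
move=> MX; apply: commr_sum => l _.
by rewrite /GRing.comm -scalerAr -scalerAl (commrX l MX).
Qed.

Lemma col_commr_mulx M (j : 'I_n.+1) :
  GRing.comm X M -> col j M = X ^+ j *m col 0 M.
Proof.
move=> XM; rewrite colE -col0_mulx_pow colE mulmxA mulmxE (commrX j (commr_sym XM)).
by rewrite -mulmxE -mulmxA -colE.
Qed.

Lemma commr_mulx_mulop_col0 M : GRing.comm X M -> M = mulop (col 0 M).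
Proof.
move=> XM; apply/trmx_inj/row_matrixP => j; rewrite -!tr_col; congr trmx.
rewrite col_commr_mulx // [RHS]col_commr_mulx ?col0_mulop //.
exact/commr_mulop/commr_refl.
Qed.

Lemma mulop_mulx c : mulop c * X = mulop (X *m c).
Proof.
have Xc : GRing.comm X (mulop c) by apply/commr_mulop/commr_refl.
rewrite [LHS]commr_mulx_mulop_col0; last exact/commrM/commr_refl.
by rewrite colE -Xc -mulmxE -mulmxA -colE col0_mulop.
Qed.

Lemma coef0_eq0_mulx c : c 0 0 = 0 -> exists c', c = X *m c'.
Proof.
move=> c0; exists (\col_i c (inord i.+1) 0).
apply/matrixP => i j; rewrite ord1 mulx_mul_entry mxE.
have i_lt := ltn_ord i; case: ifP => [i_gt0 | /negbT].
  by rewrite inordK ?prednK ?inord_val // ltnW.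
by rewrite -eqn0Ngt => /eqP i0; rewrite (_ : i = 0) //; apply: val_inj.
Qed.

End MultiplicationByX.

Section AdjointOfX.
Variables (k : fieldType) (n : nat).
Local Notation X := (mulx k n).
Implicit Types (M N : 'M[k]_n.+1) (c : 'cV[k]_n.+1).

Lemma comm_eq0P M N : comm M N = 0 <-> GRing.comm M N.
Proof.
rewrite /comm /GRing.comm; split=> [/eqP|->]; last exact: subrr.
by rewrite subr_eq0 => /eqP.
Qed.

Lemma comm_commute M N P :
  GRing.comm M N -> comm M (comm N P) = comm N (comm M P).
Proof.
rewrite /comm /GRing.comm => MN; rewrite !mulrBr !mulrBl !mulrA MN -!mulrA MN.
by rewrite !opprD !opprK addrACA.
Qed.

Lemma mxtrace_adx M : \tr (adx M) = 0.
Proof. by rewrite /adx /comm -!mulmxE raddfB /= mxtrace_mulC subrr. Qed.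

Lemma adx_eq0_comm_mulop M c : adx M = 0 -> comm (mulop c) M = 0.
Proof. by move/comm_eq0P=> XM; apply/comm_eq0P/commr_sym/commr_mulop/commr_sym. Qed.

Lemma adx_pow_comm_mulop p c M :
  adx_pow p (comm (mulop c) M) = comm (mulop c) (adx_pow p M).
Proof.
elim: p => [//|p IH]; rewrite /adx_pow !iterS -!/(adx_pow p _) IH /adx.
by rewrite comm_commute //; apply/commr_mulop/commr_refl.
Qed.

Lemma adx_pow_mulopl p c M : adx_pow p (mulop c * M) = mulop c * adx_pow p M.
Proof.
elim: p => [//|p IH]; rewrite /adx_pow !iterS -!/(adx_pow p _) IH /adx /comm.
by rewrite mulrBr !mulrA (commr_mulop c (commr_refl X)).
Qed.

Lemma iter_comm_nseq_mulx p M : iter_comm (nseq p (col 0 X)) M = adx_pow p M.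
Proof.
elim: p => [//|p IH]; rewrite /adx_pow iterS -/(adx_pow p _) -IH /=.
by rewrite -(commr_mulx_mulop_col0 (commr_refl X)).
Qed.

(* For the algebra generated by x, the order filtration is the kernel
   filtration of ad_x. *)
Lemma in_Dp_adx_powP p M : in_Dp p M <-> adx_pow p.+1 M = 0.
Proof.
split=> [M_Dp | ].
  by rewrite -iter_comm_nseq_mulx; apply: M_Dp; rewrite size_nseq.
elim: p M => [|p IH] M adx0 fs.
  by case: fs => [|f [|]] //= _; apply: adx_eq0_comm_mulop.
case/lastP: fs => [//|fs f]; rewrite size_rcons => -[size_fs].
rewrite /iter_comm foldr_rcons -/(iter_comm fs _); apply: IH => //.
by rewrite adx_pow_comm_mulop; apply: adx_eq0_comm_mulop.
Qed.

End AdjointOfX.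

Section BandMatrices.
Variables (k : fieldType) (n : nat).
Local Notation X := (mulx k n).

Definition superdiag (s : nat -> k) : 'M[k]_n.+1 :=
  \matrix_(i, j) (if j == i.+1 :> nat then s j else 0).

Lemma adx_entry (M : 'M[k]_n.+1) i j : adx M i j = (X *m M) i j - (M *m X) i j.
Proof. by rewrite /adx /comm -!mulmxE [LHS]mxE [X in _ + X]mxE. Qed.

Lemma adx_diag (d : 'rV[k]_n.+1) :
  adx (diag_mx d) = \matrix_(i, j) ((i == j.+1 :> nat)%:R * (d 0 j - d 0 i)).
Proof.
apply/matrixP => i j; rewrite adx_entry mul_mx_diag mul_diag_mx !mxE.
by rewrite mulrBr [d 0 i * _]mulrC.
Qed.

Lemma adx_superdiag (s : nat -> k) : s 0%N = 0 -> s n.+1 = 0 ->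
  adx (superdiag s) = diag_mx (\row_i (s i - s i.+1)).
Proof.
move=> s0 sn; apply/matrixP => i j.
rewrite adx_entry mulx_mul_entry mul_mulx_entry !mxE -val_eqE /=.
have i_lt := ltn_ord i; have j_lt := ltn_ord j.
have -> : (if (0 < i)%N then if j == (@inord n i.-1).+1 :> nat then s j else 0
           else 0) = s i *+ (i == j :> nat).
  case: ifP => [i_gt0 | /negbT]; last first.
    by rewrite -eqn0Ngt => /eqP i0; rewrite i0 s0 mul0rn.
  rewrite inordK; last exact: leq_ltn_trans (leq_pred _) i_lt.
  by rewrite prednK // eq_sym; case: eqP => [->|]; rewrite ?mulr1n.
have -> : (if (j < n)%N then if @inord n j.+1 == i.+1 :> nat then s (@inord n j.+1)
           else 0 else 0) = s i.+1 *+ (i == j :> nat).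
  case: ifP => [j_lt_n | /negbT].
    by rewrite inordK // eqSS eq_sym; case: eqP => [->|].
  rewrite -leqNgt => j_ge; case: eqP => // ij.
  have i_n : (i : nat) = n by apply/eqP; rewrite eqn_leq -ltnS i_lt ij j_ge.
  by rewrite i_n sn mul0rn.
by rewrite mulrnBl.
Qed.

End BandMatrices.

Section Factorization.
Variables (k : fieldType) (n : nat).
Hypothesis char_k : [pchar k] =i pred0.
Local Notation X := (mulx k n).

(* The image of ad_x is traceless, so for p > 0 the multiplication operator
   ad_x^p(d) has zero constant coefficient. *)
Lemma adx_pow_in_Dp_mulx p (d : 'M[k]_n.+1) :
  (0 < p)%N -> in_Dp p d -> exists c, adx_pow p d = mulop c * X.
Proof.
move=> p_gt0 /in_Dp_adx_powP; rewrite /adx_pow iterS -/(adx_pow p d).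
set g := adx_pow p d => /comm_eq0P /commr_mulx_mulop_col0 g_mulop.
have tr_g : \tr g = 0 by rewrite /g -(prednK p_gt0) /adx_pow iterS mxtrace_adx.
have g00 : col 0 g 0 0 = 0.
  move: tr_g; rewrite {1}g_mulop mxtrace_mulop -mulr_natr => /eqP.
  by rewrite mulf_eq0 ((pcharf0P k).1 char_k) orbF => /eqP.
have [c g_col] := coef0_eq0_mulx g00.
by exists c; rewrite g_mulop g_col mulop_mulx.
Qed.

Lemma in_Dp_mulop_lift p (L : 'M[k]_n.+1) c : adx_pow p L = X ->
  in_Dp p (mulop c * L) /\ adx_pow p (mulop c * L) = mulop c * X.
Proof.
move=> L_lift; rewrite adx_pow_mulopl L_lift; split=> //.
apply/in_Dp_adx_powP; rewrite adx_pow_mulopl /adx_pow iterS -/(adx_pow p L).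
by rewrite L_lift /adx /comm subrr mulr0.
Qed.

Lemma is_v1_of_lift p (L : 'M[k]_n.+1) :
  (0 < n)%N -> (0 < p)%N -> adx_pow p L = X -> is_v k n p 1.
Proof.
move=> n_gt0 p_gt0 L_lift; split=> // g; rewrite expr1; split.
  by move=> [d [d_Dp <-]]; apply: adx_pow_in_Dp_mulx.
by move=> [c ->]; exists (mulop c * L); apply: in_Dp_mulop_lift.
Qed.

End Factorization.

Section Lifts.
Variables (k : fieldType) (n : nat).

(* The quadratic vanishing at 0 and n + 1 with second difference 1: thus
   lift1 acts as n/2 - x d/dx, with [x, lift1] = x, and lift2 acts as
   (x d/dx - n) d/dx / 2, with [x, lift2] = lift1. *)
Definition lift_coef (j : nat) : k := j%:R * (j%:R - n%:R - 1) / 2%:R.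

Definition lift1 : 'M[k]_n.+1 := diag_mx (\row_i (lift_coef i - lift_coef i.+1)).

Definition lift2 : 'M[k]_n.+1 := superdiag n lift_coef.

Lemma adx_lift2 : adx lift2 = lift1.
Proof.
by apply: adx_superdiag; rewrite /lift_coef ?mul0r // -addn1 natrD; ring.
Qed.

Lemma adx_lift1 : (2%:R : k) != 0 -> adx lift1 = mulx k n.
Proof.
move=> two_neq0; rewrite adx_diag; apply/matrixP => i j; rewrite !mxE.
case: eqP => [-> | _]; last by rewrite mul0r.
by rewrite mul1r /lift_coef !mulrSr; field.
Qed.

End Lifts.

Theorem lemma6 (k : fieldType) (hk : [pchar k] =i pred0) (n : nat) :
  (0 < n)%N -> is_v k n 1 1 /\ is_v k n 2 1.
Proof.
move=> n_gt0.
have two_neq0 : (2%:R : k) != 0 by rewrite ((pcharf0P k).1 hk).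
split.
  apply: (is_v1_of_lift (p := 1) (L := lift1 k n) hk n_gt0 isT).
  exact: adx_lift1.
apply: (is_v1_of_lift (p := 2) (L := lift2 k n) hk n_gt0 isT).
by rewrite /adx_pow !iterS /= adx_lift2 adx_lift1.
Qed.
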